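(* Let $\beta>0$ and $V\in\mathbb R^{d\times d}$ be real symmetric with orthonormal eigenbasis $(e_k)$ and eigenvalues $(\lambda_k)$. Consider, for $x_i(t)\in\mathbb S^{d-1}$, $i\in[n]$, the system \[ \dot x_i=P^\perp_{x_i}\Big(\frac1{Z_i}\sum_{j=1}^n e^{\beta\langle x_i,Vx_j\rangle}Vx_j\Big),\qquad Z_i=\sum_{k=1}^n e^{\beta\langle x_i,Vx_k\rangle},\qquad P^\perp_xy=y-\langle x,y\rangle x. \] Let $s_1,\dots,s_n\in\{-1,1\}$ with $|\{i:s_i=1\}|=|\{i:s_i=-1\}|$, and suppose $x_i(0)=s_iu_0$ for all $i$, for some $u_0\in\mathbb S^{d-1}$. Then there exists $u(t)\in\mathbb S^{d-1}$ with $x_i(t)=s_iu(t)$ for all $t\ge0$ and $i\in[n]$ (i.e. the balanced bipolar manifold $\{X: \exists u\in\mathbb S^{d-1},\ x_i=s_iu\ \forall i\}$, with balanced signs, is invariant), and writing $u(t)=\sum_k u_k(t)e_k$ and $M(t)=\sum_{l=1}^d\lambda_lu_l(t)^2$, one has \[ \dot u_k=u_k\tanh(\beta M)(\lambda_k-M),\qquad k\in[d],\ t\ge0. \] *)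

From HB Require Import structures.
From mathcomp Require Import all_boot all_order all_algebra.
From mathcomp Require Import all_classical all_reals all_analysis.
Set Implicit Arguments. Unset Strict Implicit. Unset Printing Implicit Defensive.
Import Order.TTheory GRing.Theory Num.Theory.
Import numFieldNormedType.Exports.
Local Open Scope ring_scope.

Section Defs.
Variables (R : realType) (d : nat).

Definition dotv (x y : 'cV[R]_d) : R := \sum_(r < d) x r ord0 * y r ord0.

Definition proj_perp (x y : 'cV[R]_d) : 'cV[R]_d := y - dotv x y *: x.

Definition on_sphere (x : 'cV[R]_d) : Prop := dotv x x = 1.

Definition tanh (z : R) : R := (expR z - expR (- z)) / (expR z + expR (- z)).

Definition attn_Z n (beta : R) (V : 'M[R]_d) (x : 'I_n -> 'cV[R]_d) (i : 'I_n) : R :=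
  \sum_(k < n) expR (beta * dotv (x i) (V *m x k)).

Definition attn_rhs n (beta : R) (V : 'M[R]_d) (x : 'I_n -> 'cV[R]_d) (i : 'I_n)
  : 'cV[R]_d :=
  proj_perp (x i)
    ((attn_Z beta V x i)^-1 *:
       \sum_(j < n) (expR (beta * dotv (x i) (V *m x j)) *: (V *m x j))).

End Defs.

From HB Require Import structures.
From mathcomp Require Import all_boot all_order all_algebra.
From mathcomp Require Import all_classical all_reals all_analysis.
From mathcomp Require Import ring lra.
Set Implicit Arguments. Unset Strict Implicit. Unset Printing Implicit Defensive.
Import Order.TTheory GRing.Theory Num.Theory.
Import numFieldNormedType.Exports.
Local Open Scope ring_scope.
Local Open Scope classical_set_scope.

Local Notation "''[' x , y ]" := (dotv x y) : ring_scope.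
Local Notation "''[' x ]" := (dotv x x) : ring_scope.

(* Put y_i = s_i x_i.  The y_i follow a flow of the same attention type, and
   at a consensus y_1 = ... = y_n = u the balance of the signs turns every
   attention average into tanh(beta <u, V u>): all particles then move with
   the same velocity P_u^perp (tanh(beta <u, V u>) V u).  On the sphere the
   velocities are Lipschitz close to this one, so the dispersion
   W = sum_j |y_j - y_i0|^2 obeys W' <= C W with W(0) = 0, and Gronwall's
   lemma keeps it zero.  Hence x_i = s_i u, where u follows the consensus
   velocity; in the eigenbasis of V one has <u, V u> = sum_l lam_l u_l^2,
   which gives the reduced equation for the coordinates u_k. *)

Section SumsOfSquares.
Variable R : realType.

Lemma cauchy_schwarz_sum m (f g : 'I_m -> R) :
  (\sum_(j < m) f j * g j) ^+ 2 <= (\sum_(j < m) f j ^+ 2) * (\sum_(j < m) g j ^+ 2).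
Proof.
pose D i j := (f i * g j - f j * g i) ^+ 2.
have lagrange : \sum_(i < m) \sum_(j < m) D i j =
    2 * ((\sum_(j < m) f j ^+ 2) * (\sum_(j < m) g j ^+ 2) -
         (\sum_(j < m) f j * g j) ^+ 2).
  pose A i j := f i ^+ 2 * g j ^+ 2; pose B i j := f i * g i * (f j * g j).
  have prod_sum (a b : 'I_m -> R) :
      (\sum_(j < m) a j) * (\sum_(j < m) b j) = \sum_(i < m) \sum_(j < m) a i * b j.
    by rewrite mulr_suml; apply: eq_bigr => i _; rewrite mulr_sumr.
  have -> : \sum_(i < m) \sum_(j < m) D i j =
      \sum_(i < m) \sum_(j < m) (A i j + A j i - 2 * B i j).
    by apply: eq_bigr => i _; apply: eq_bigr => j _; rewrite /D /A /B; ring.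
  under eq_bigr do rewrite sumrB big_split /=.
  rewrite sumrB big_split /= [X in _ + X - _]exchange_big /=.
  rewrite expr2 !prod_sum /A /B.
  under [X in _ - X]eq_bigr do rewrite -mulr_sumr.
  rewrite -mulr_sumr; ring.
have : 0 <= \sum_(i < m) \sum_(j < m) D i j.
  by do 2!apply: sumr_ge0 => ? _; exact: sqr_ge0.
rewrite lagrange; lra.
Qed.

Lemma sqr_sum_le m (f : 'I_m -> R) :
  (\sum_(j < m) f j) ^+ 2 <= m%:R * \sum_(j < m) f j ^+ 2.
Proof.
have := cauchy_schwarz_sum f (fun _ => 1).
under eq_bigr do rewrite mulr1.
by rewrite expr1n sumr_const card_ord mulrC mulr_natl.
Qed.

End SumsOfSquares.

Section DotProduct.
Variables (R : realType) (d : nat).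
Implicit Types (x y z : 'cV[R]_d) (a : R).

Lemma dotvC x y : '[x, y] = '[y, x].
Proof. by apply: eq_bigr => r _; rewrite mulrC. Qed.

Lemma dotvDl x y z : '[x + y, z] = '[x, z] + '[y, z].
Proof. by rewrite /dotv -big_split; apply: eq_bigr => r _; rewrite mxE mulrDl. Qed.

Lemma dotvZl a x y : '[a *: x, y] = a * '[x, y].
Proof. by rewrite /dotv mulr_sumr; apply: eq_bigr => r _; rewrite mxE mulrA. Qed.

Lemma dotvNl x y : '[- x, y] = - '[x, y].
Proof. by rewrite -scaleN1r dotvZl mulN1r. Qed.

Lemma dotvBl x y z : '[x - y, z] = '[x, z] - '[y, z].
Proof. by rewrite dotvDl dotvNl. Qed.

Lemma dotv0l x : '[0, x] = 0.
Proof. by rewrite -(scale0r 0) dotvZl mul0r. Qed.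

Lemma dotv_suml m (w : 'I_m -> 'cV[R]_d) y :
  '[\sum_(j < m) w j, y] = \sum_(j < m) '[w j, y].
Proof.
rewrite /dotv exchange_big; apply: eq_bigr => r _.
by rewrite summxE mulr_suml.
Qed.

Lemma dotvDr x y z : '[x, y + z] = '[x, y] + '[x, z].
Proof. by rewrite dotvC dotvDl !(dotvC x). Qed.

Lemma dotvZr a x y : '[x, a *: y] = a * '[x, y].
Proof. by rewrite dotvC dotvZl dotvC. Qed.

Lemma dotvNr x y : '[x, - y] = - '[x, y].
Proof. by rewrite dotvC dotvNl dotvC. Qed.

Lemma dotvBr x y z : '[x, y - z] = '[x, y] - '[x, z].
Proof. by rewrite dotvDr dotvNr. Qed.

Lemma dotv0r x : '[x, 0] = 0.
Proof. by rewrite dotvC dotv0l. Qed.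

Lemma dotv_mulmx (V : 'M[R]_d) x y : '[x, V *m y] = '[V^T *m x, y].
Proof.
rewrite /dotv; under eq_bigr do rewrite mxE mulr_sumr.
under [RHS]eq_bigr do rewrite mxE mulr_suml.
rewrite exchange_big; apply: eq_bigr => r _; apply: eq_bigr => c _.
by rewrite mxE mulrCA mulrA.
Qed.

Lemma dotvvE x : '[x] = \sum_(r < d) x r ord0 ^+ 2.
Proof. by apply: eq_bigr => r _; rewrite expr2. Qed.

Lemma dotvv_ge0 x : 0 <= '[x].
Proof. by rewrite dotvvE; apply: sumr_ge0 => r _; exact: sqr_ge0. Qed.

Lemma dotvv_eq0 x : '[x] = 0 -> x = 0.
Proof.
rewrite dotvvE => /eqP; rewrite psumr_eq0 => [/allP x0|r _]; last exact: sqr_ge0.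
apply/matrixP => r c; rewrite (ord1 c) mxE.
by have /implyP/(_ isT) := x0 r (mem_index_enum r); rewrite sqrf_eq0 => /eqP.
Qed.

Lemma dotvvZ a x : '[a *: x] = a ^+ 2 * '[x].
Proof. by rewrite dotvZl dotvZr mulrA expr2. Qed.

Lemma dotvvN x : '[- x] = '[x].
Proof. by rewrite dotvNl dotvNr opprK. Qed.

Lemma dotv_cauchy_schwarz x y : '[x, y] ^+ 2 <= '[x] * '[y].
Proof. by rewrite !dotvvE; exact: cauchy_schwarz_sum. Qed.

Lemma dotv_amgm x y : 2 * '[x, y] <= '[x] + '[y].
Proof. by have := dotvv_ge0 (x - y); rewrite !dotvBl !dotvBr (dotvC y x); lra. Qed.

Lemma dotvvD_le x y : '[x + y] <= 2 * '[x] + 2 * '[y].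
Proof. by rewrite !dotvDl !dotvDr (dotvC y x); have := dotv_amgm x y; lra. Qed.

Lemma dotvvB_le x y : '[x - y] <= 2 * '[x] + 2 * '[y].
Proof. by rewrite -(dotvvN y); exact: dotvvD_le. Qed.

Lemma dotvv_sum_le m (w : 'I_m -> 'cV[R]_d) :
  '[\sum_(j < m) w j] <= m%:R * \sum_(j < m) '[w j].
Proof.
rewrite dotvvE; under eq_bigr do rewrite summxE.
under [X in _ <= _ * X]eq_bigr do rewrite dotvvE.
rewrite exchange_big mulr_sumr; apply: ler_sum => r _; exact: sqr_sum_le.
Qed.

Definition frobenius2 (V : 'M[R]_d) := \sum_(r < d) \sum_(c < d) V r c ^+ 2.

Lemma frobenius2_ge0 V : 0 <= frobenius2 V.
Proof. by do 2!apply: sumr_ge0 => ? _; exact: sqr_ge0. Qed.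

Lemma dotvv_mulmx_le V z : '[V *m z] <= frobenius2 V * '[z].
Proof.
rewrite dotvvE /frobenius2 mulr_suml; apply: ler_sum => r _.
rewrite mxE dotvvE; exact: (cauchy_schwarz_sum (V r) (fun c => z c ord0)).
Qed.

Lemma dotv_mulmx_sqr_le V x z : on_sphere x -> '[x, V *m z] ^+ 2 <= frobenius2 V * '[z].
Proof.
by move=> x1; apply: le_trans (dotv_cauchy_schwarz _ _) _; rewrite x1 mul1r dotvv_mulmx_le.
Qed.

End DotProduct.

Section CoordinateCalculus.
Variables (R : realType) (d : nat).
Implicit Types (f g : R -> 'cV[R]_d) (t : R).

Definition coord_derive f t (df : 'cV[R]_d) :=
  forall r, is_derive t 1 (fun tau => f tau r ord0) (df r ord0).

Lemma coord_deriveZ f t df (a : R) :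
  coord_derive f t df -> coord_derive (fun tau => a *: f tau) t (a *: df).
Proof.
move=> fd r; rewrite mxE.
under eq_fun do rewrite !mxE.
exact: is_deriveZ.
Qed.

Lemma coord_deriveB f g t df dg : coord_derive f t df -> coord_derive g t dg ->
  coord_derive (fun tau => f tau - g tau) t (df - dg).
Proof.
move=> fd gd r; rewrite !mxE.
under eq_fun do rewrite !mxE.
have -> : (fun tau => f tau r ord0 - g tau r ord0) =
  (fun tau => f tau r ord0) - (fun tau => g tau r ord0) by [].
exact: is_deriveB.
Qed.

Lemma coord_derive_cst (a : 'cV[R]_d) t : coord_derive (fun=> a) t 0.
Proof. by move=> r; rewrite mxE; exact: is_derive_cst. Qed.

Lemma is_derive_dotv f g t df dg : coord_derive f t df -> coord_derive g t dg ->
  is_derive t 1 (fun tau => '[f tau, g tau]) ('[df, g t] + '[f t, dg]).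
Proof.
move=> fd gd; rewrite /dotv -big_split /=.
have -> : (fun tau => \sum_(r < d) f tau r ord0 * g tau r ord0) =
    \sum_(r < d) (fun tau => f tau r ord0 * g tau r ord0).
  by apply/funext => tau; rewrite fct_sumE; apply: eq_bigr.
apply: is_derive_sum => r.
have -> : df r ord0 * g t r ord0 + f t r ord0 * dg r ord0 =
    f t r ord0 *: dg r ord0 + g t r ord0 *: df r ord0.
  by rewrite addrC [df r ord0 * _]mulrC.
exact: is_deriveM.
Qed.

Lemma cvg_sum_ord (T : Type) (F : set_system T) {FF : Filter F} m
    (h : 'I_m -> T -> R) (l : 'I_m -> R) :
  (forall j, h j @ F --> l j) ->
  (fun z => \sum_(j < m) h j z) @ F --> \sum_(j < m) l j.
Proof.
move=> hl; have -> : (fun z => \sum_(j < m) h j z) = \sum_(j < m) h j.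
  by apply/funext => z; rewrite fct_sumE.
elim/big_rec2: _ => [|j a f _ fa]; [exact: cvg_cst | exact: cvgD].
Qed.

Lemma cvg_dotv (T : Type) (F : set_system T) {FF : Filter F}
    (f g : T -> 'cV[R]_d) (a b : 'cV[R]_d) :
  (forall r, (fun z => f z r ord0) @ F --> a r ord0) ->
  (forall r, (fun z => g z r ord0) @ F --> b r ord0) ->
  (fun z => '[f z, g z]) @ F --> '[a, b].
Proof. by move=> fa gb; apply: cvg_sum_ord => r; exact: cvgM. Qed.

End CoordinateCalculus.

Section Gronwall.
Variable R : realType.

Lemma gronwall_zero (W dW : R -> R) (C : R) : 0 <= C ->
  (forall t : R, 0 < t -> is_derive t 1 W (dW t)) ->
  (forall t : R, 0 < t -> dW t <= C * W t) ->
  (forall t : R, 0 <= t -> 0 <= W t) ->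
  W @ 0^'+ --> W 0 -> W 0 = 0 ->
  forall t : R, 0 <= t -> W t = 0.
Proof.
move=> C0 Wd dW_le W_ge0 W_cvg W00 t; rewrite le_eqVlt => /predU1P [<- // | t0].
pose g z := W z * expR (- C * z).
have gd (z : R) : 0 < z ->
    is_derive z 1 g (W z *: (expR (- C * z) * - C) + expR (- C * z) *: dW z).
  move=> z0; apply: is_deriveM (Wd z z0) _.
  have -> : (fun z => expR (- C * z)) = expR \o ( *%R (- C)) by [].
  apply: is_derive1_comp.
  by rewrite -[X in is_derive _ _ _ X]mulr1; exact: is_deriveZ.
have g_noninc : {in `]0, t + 1[%R &, {homo g : x y /~ x <= y}}.
  apply: ler0_derive1_le_oo.
  - move=> z; rewrite in_itv /= => /andP [z0 _]; by case: (gd z z0).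
  - move=> z; rewrite in_itv /= => /andP [z0 _].
    rewrite derive1E (@derive_val _ _ _ _ _ _ _ (gd z z0)).
    have := dW_le z z0; have := expR_gt0 (- C * z).
    rewrite /GRing.scale /=; nra.
  - move=> z; rewrite inE /= in_itv /= => /andP [z0 _].
    by apply: differentiable_continuous; rewrite -derivable1_diffP; case: (gd z z0).
have g_le (z : R) : 0 < z -> z <= t -> g t <= W z.
  move=> z0 zt; have tt1 : t < t + 1 by lra.
  have := g_noninc t z; rewrite !in_itv /= z0 t0 tt1 (le_lt_trans zt tt1).
  move=> /(_ isT isT zt) gtz; apply: (le_trans gtz); rewrite /g.
  have : expR (- C * z) <= 1 by rewrite expR_le1; nra.
  by have := W_ge0 z (ltW z0); have := expR_gt0 (- C * z); nra.
have gt_le0 : g t <= 0.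
  rewrite -W00; apply: (cvgr_to_ge W_cvg); near=> z.
  by apply: g_le; near: z; [exact: nbhs_right_gt | exact: nbhs_right_ltW].
by have := W_ge0 t (ltW t0); have := expR_gt0 (- C * t); rewrite /g in gt_le0; nra.
Unshelve. all: by end_near.
Qed.

End Gronwall.

Section OrthonormalEigenbasis.
Variables (R : realType) (d : nat) (e : 'I_d -> 'cV[R]_d).
Hypothesis e_orthonormal : forall k l, '[e k, e l] = (k == l)%:R.

Lemma orthonormal_expansion (z : 'cV[R]_d) : z = \sum_(l < d) '[e l, z] *: e l.
Proof.
pose E := \matrix_(r < d, l < d) e l r ord0.
have EtE : E^T *m E = 1%:M.
  by apply/matrixP => k l; rewrite !mxE -e_orthonormal; apply: eq_bigr => r _; rewrite !mxE.
apply/matrixP => r c; rewrite (ord1 c) -{1}[z]mul1mx -(mulmx1C EtE) -mulmxA.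
rewrite summxE !mxE; apply: eq_bigr => l _.
rewrite !mxE mulrC; congr (_ * _); apply: eq_bigr => q _; by rewrite !mxE.
Qed.

Variables (V : 'M[R]_d) (lam : 'I_d -> R).
Hypotheses (V_sym : V^T = V) (e_eigen : forall k, V *m e k = lam k *: e k).

Lemma dotv_eigenvector k (z : 'cV[R]_d) : '[e k, V *m z] = lam k * '[e k, z].
Proof. by rewrite dotv_mulmx V_sym e_eigen dotvZl. Qed.

Lemma quadratic_form_eigenbasis (z : 'cV[R]_d) :
  '[z, V *m z] = \sum_(l < d) lam l * '[e l, z] ^+ 2.
Proof.
rewrite {1}(orthonormal_expansion z) dotv_suml; apply: eq_bigr => l _.
by rewrite dotvZl dotv_eigenvector mulrCA expr2.
Qed.

End OrthonormalEigenbasis.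

Section Softmax.
Variable R : realType.
Implicit Types (a b K : R).

Lemma expR_lipschitz a b K : `|a| <= K -> `|b| <= K ->
  `|expR a - expR b| <= expR K * `|a - b|.
Proof.
wlog ba : a b / b <= a.
  move=> H ha hb; case/orP: (le_total b a) => [ba | ab]; first exact: H.
  by rewrite distrC [`|a - b|]distrC; exact: H.
move=> /ler_normlP [_ aK] _; rewrite !ger0_norm ?subr_ge0 ?ler_expR //.
have := expR_ge1Dx (b - a); rewrite -(ler_pM2l (expR_gt0 a)) -expRD [a + _]addrC subrK.
have : expR a <= expR K by rewrite ler_expR.
have := expR_gt0 a; nra.
Qed.

Definition softmax_avg m (w l : 'I_m -> R) :=
  (\sum_(j < m) w j * expR (l j)) / \sum_(j < m) expR (l j).

Variables (m : nat) (w : 'I_m -> R).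
Hypothesis w_le1 : forall j, `|w j| <= 1.

Lemma expR_le_sum (l : 'I_m -> R) (j : 'I_m) : expR (l j) <= \sum_(k < m) expR (l k).
Proof. by rewrite (bigD1 j) //= lerDl; apply: sumr_ge0 => k _; exact: expR_ge0. Qed.

Lemma sum_expR_gt0 (l : 'I_m -> R) (j : 'I_m) : 0 < \sum_(k < m) expR (l k).
Proof. exact: lt_le_trans (expR_gt0 _) (expR_le_sum l j). Qed.

Lemma softmax_avg_le1 (l : 'I_m -> R) (j : 'I_m) : `|softmax_avg w l| <= 1.
Proof.
rewrite /softmax_avg normrM normfV (gtr0_norm (sum_expR_gt0 l j)).
rewrite ler_pdivrMr ?(sum_expR_gt0 l j) // mul1r.
apply: (le_trans (ler_norm_sum _ _ _)); apply: ler_sum => k _.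
by rewrite normrM (gtr0_norm (expR_gt0 _)) ler_piMl ?expR_ge0.
Qed.

Lemma softmax_avg_dist_le (l l' : 'I_m -> R) K (j : 'I_m) :
  (forall k, `|l k| <= K) -> (forall k, `|l' k| <= K) ->
  `|softmax_avg w l - softmax_avg w l'| <=
  2 * expR K * expR K * \sum_(k < m) `|l k - l' k|.
Proof.
move=> lK l'K; rewrite /softmax_avg.
set Z := \sum_(k < m) expR (l k); set Z' := \sum_(k < m) expR (l' k).
set N := \sum_(k < m) _; set N' := \sum_(k < m) _.
set D := \sum_(k < m) `|expR (l k) - expR (l' k)|.
have Z_gt0 : 0 < Z := sum_expR_gt0 l j.
have Z'_gt0 : 0 < Z' := sum_expR_gt0 l' j.
have invZ_le : Z^-1 <= expR K.
  rewrite -[expR K]invrK -expRN lef_pV2 ?posrE ?expR_gt0 //.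
  by apply: le_trans (expR_le_sum l j); rewrite ler_expR lerNl; case/ler_normlP: (lK j).
have dN : `|N - N'| <= D.
  rewrite -sumrB; apply: (le_trans (ler_norm_sum _ _ _)); apply: ler_sum => k _.
  by rewrite -mulrBr normrM ler_piMl.
have dZ : `|Z' - Z| <= D.
  by rewrite distrC -sumrB; apply: (le_trans (ler_norm_sum _ _ _)).
have D_le : D <= expR K * \sum_(k < m) `|l k - l' k|.
  by rewrite mulr_sumr; apply: ler_sum => k _; exact: expR_lipschitz.
have S'_le1 : `|N' / Z'| <= 1 := softmax_avg_le1 l' j.
have -> : N / Z - N' / Z' = ((N - N') + N' / Z' * (Z' - Z)) / Z.
  by field; rewrite !gt_eqF.
rewrite normrM normfV (gtr0_norm Z_gt0).
have num_le : `|N - N' + N' / Z' * (Z' - Z)| <= 2 * D.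
  apply: (le_trans (ler_normD _ _)); rewrite normrM.
  have : `|N' / Z'| * `|Z' - Z| <= `|Z' - Z| by rewrite ler_piMl.
  lra.
have := normr_ge0 (N - N' + N' / Z' * (Z' - Z)); have := invr_gt0 Z; rewrite Z_gt0.
have := expR_gt0 K; nra.
Qed.

Lemma softmax_avg_sqrdist_le (l l' : 'I_m -> R) K (j : 'I_m) :
  (forall k, `|l k| <= K) -> (forall k, `|l' k| <= K) ->
  (softmax_avg w l - softmax_avg w l') ^+ 2 <=
  (2 * expR K * expR K) ^+ 2 * m%:R * \sum_(k < m) (l k - l' k) ^+ 2.
Proof.
move=> lK l'K; have dist := softmax_avg_dist_le j lK l'K.
have -> : \sum_(k < m) (l k - l' k) ^+ 2 = \sum_(k < m) `|l k - l' k| ^+ 2.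
  by apply: eq_bigr => k _; rewrite real_normK ?num_real.
set c := 2 * expR K * expR K in dist *; set S := \sum_(k < m) `|l k - l' k| in dist.
have c_ge0 : 0 <= c by rewrite /c; have := expR_gt0 K; nra.
apply: (@le_trans _ _ ((c * S) ^+ 2)).
  rewrite -real_normK ?num_real //; apply: lerXn2r; rewrite ?nnegrE //.
  by apply: mulr_ge0 => //; exact: sumr_ge0.
by rewrite exprMn -mulrA ler_wpM2l ?sqr_ge0 //; exact: sqr_sum_le.
Qed.

End Softmax.

Section BalancedSigns.
Variables (R : realType) (n : nat) (s : 'I_n -> R).
Hypotheses (s_sign : forall i, s i = 1 \/ s i = -1)
  (s_balanced : #|[set i | s i == 1]%SET| = #|[set i | s i == -1]%SET|).

Lemma sum_balanced_signs (F : R -> R) :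
  \sum_(j < n) F (s j) = #|[set i | s i == 1]%SET|%:R * (F 1 + F (-1)).
Proof.
have N1_neq1 : (-1 : R) != 1 by apply/eqP; lra.
rewrite mulrDr {2}s_balanced (bigID (fun j => s j == 1)) /=; congr (_ + _).
  rewrite (eq_bigr (fun=> F 1)); last by move=> j /eqP ->.
  rewrite (eq_bigl (fun j => j \in [set i | s i == 1]%SET)); last by move=> j; rewrite inE.
  by rewrite sumr_const mulr_natl.
rewrite (eq_bigr (fun=> F (-1))); last by move=> j; case: (s_sign j) => ->; rewrite ?eqxx.
rewrite (eq_bigl (fun j => j \in [set i | s i == -1]%SET)); last first.
  move=> j; rewrite inE; case: (s_sign j) => ->; rewrite eqxx ?N1_neq1 //.
  by rewrite eq_sym (negbTE N1_neq1).
by rewrite sumr_const mulr_natl.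
Qed.

Lemma softmax_avg_balanced (i : 'I_n) (sg b : R) : sg = 1 \/ sg = -1 ->
  softmax_avg (fun j => sg * s j) (fun j => sg * s j * b) = tanh b.
Proof.
move=> sg_sign; have npos_gt0 : 0 < #|[set i | s i == 1]%SET|%:R :> R.
  suff : (0 < #|[set i | s i == 1%R]%SET|)%N by rewrite ltr0n.
  by case: (s_sign i) => si; [|rewrite s_balanced];
    apply/card_gt0P; exists i; rewrite inE si.
rewrite /softmax_avg (sum_balanced_signs (fun v => sg * v * expR (sg * v * b))).
rewrite (sum_balanced_signs (fun v => expR (sg * v * b))) /tanh.
have expR_sum_gt0 : 0 < expR b + expR (- b) by rewrite addr_gt0 ?expR_gt0.
by case: sg_sign => ->; rewrite !(mul1r, mulN1r, mulr1, mulrN1, opprK);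
  field; rewrite !gt_eqF.
Qed.

End BalancedSigns.

Section Projection.
Variables (R : realType) (d : nat).
Implicit Types (x y z : 'cV[R]_d) (a : R).

Lemma proj_perpZr a x y : proj_perp x (a *: y) = a *: proj_perp x y.
Proof. by rewrite /proj_perp dotvZr scalerBr scalerA. Qed.

Lemma proj_perp_sign a x y : a ^+ 2 = 1 -> proj_perp (a *: x) y = proj_perp x y.
Proof. by move=> a2; rewrite /proj_perp dotvZl scalerA mulrAC -expr2 a2 mul1r. Qed.

Lemma proj_perp_sqrdist_le x u K K' B : on_sphere x -> on_sphere u -> '[K] <= B ->
  '[proj_perp x K - proj_perp u K'] <= 8 * '[K - K'] + 8 * B * '[x - u].
Proof.
move=> x1 u1 KB.
set P := - '[x, K] *: (x - u); set Q := - '[x - u, K] *: u; set T := - '[u, K - K'] *: u.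
have -> : proj_perp x K - proj_perp u K' = (K - K') + P + (Q + T).
  rewrite /proj_perp /P /Q /T !dotvBl !dotvBr; apply/matrixP => r c; rewrite !mxE; ring.
have hP : '[P] <= B * '[x - u].
  rewrite dotvvZ sqrrN ler_wpM2r ?dotvv_ge0 //.
  by apply: le_trans (dotv_cauchy_schwarz _ _) _; rewrite x1 mul1r.
have hQ : '[Q] <= B * '[x - u].
  rewrite dotvvZ sqrrN u1 mulr1 mulrC; apply: le_trans (dotv_cauchy_schwarz _ _) _.
  by rewrite ler_wpM2l ?dotvv_ge0.
have hT : '[T] <= '[K - K'].
  rewrite dotvvZ sqrrN u1 mulr1; apply: le_trans (dotv_cauchy_schwarz _ _) _.
  by rewrite u1 mul1r.
have := dotvvD_le (K - K' + P) (Q + T); have := dotvvD_le (K - K') P.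
have := dotvvD_le Q T; have := dotvv_ge0 (K - K' + P); have := dotvv_ge0 (Q + T).
lra.
Qed.

End Projection.

Section SignedDynamics.
Variables (R : realType) (n d : nat) (beta : R) (V : 'M[R]_d) (s : 'I_n -> R).
Hypothesis s_sign : forall i, s i = 1 \/ s i = -1.
Implicit Types (y : 'I_n -> 'cV[R]_d) (u : 'cV[R]_d).

Lemma sign_sqr i : s i ^+ 2 = 1.
Proof. by case: (s_sign i) => ->; rewrite ?sqrrN expr1n. Qed.

Lemma sign_mul_sqr i j : (s i * s j) ^+ 2 = 1.
Proof. by rewrite exprMn !sign_sqr mulr1. Qed.

Lemma norm_sign_mul i j : `|s i * s j| = 1.
Proof.
rewrite normrM; case: (s_sign i) => ->; case: (s_sign j) => ->.
all: by rewrite ?normrN normr1 mulr1.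
Qed.

Definition signed_rhs y i := s i *: attn_rhs beta V (fun j => s j *: y j) i.

Definition logit y i j := s i * s j * (beta * '[y i, V *m y j]).

Definition attn_weight y i j :=
  expR (logit y i j) / (\sum_(k < n) expR (logit y i k)) * (s i * s j).

Definition attn_mean y i := \sum_(j < n) attn_weight y i j *: (V *m y j).

Lemma signed_rhsE y i : signed_rhs y i = proj_perp (y i) (attn_mean y i).
Proof.
have logitE j : beta * '[s i *: y i, V *m (s j *: y j)] = logit y i j.
  by rewrite -scalemxAr dotvZl dotvZr /logit; ring.
rewrite /signed_rhs /attn_rhs /attn_Z proj_perp_sign ?sign_sqr // -proj_perpZr.
congr proj_perp; rewrite scalerA scaler_sumr; apply: eq_bigr => j _.
rewrite logitE -scalemxAr !scalerA /attn_weight; congr (_ *: _).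
have -> : \sum_(k < n) expR (beta * '[s i *: y i, V *m (s k *: y k)]) =
    \sum_(k < n) expR (logit y i k) by apply: eq_bigr => k _; rewrite logitE.
by set Z := \sum_(k < n) _; ring.
Qed.

Lemma attn_weight_le1 y i j : `|attn_weight y i j| <= 1.
Proof.
rewrite /attn_weight normrM norm_sign_mul mulr1 normrM normfV (gtr0_norm (expR_gt0 _)).
rewrite gtr0_norm ?(sum_expR_gt0 _ j) // ler_pdivrMr ?(sum_expR_gt0 _ j) // mul1r.
exact: expR_le_sum.
Qed.

Lemma sum_attn_weight y i :
  \sum_(j < n) attn_weight y i j = softmax_avg (fun j => s i * s j) (logit y i).
Proof.
by rewrite /softmax_avg mulr_suml; apply: eq_bigr => j _; rewrite /attn_weight; ring.
Qed.

Definition dispersion y u := \sum_(j < n) '[y j - u].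

Lemma dispersion_ge0 y u : 0 <= dispersion y u.
Proof. by apply: sumr_ge0 => j _; exact: dotvv_ge0. Qed.

Lemma dotvv_le_dispersion y u i : '[y i - u] <= dispersion y u.
Proof.
by rewrite /dispersion (bigD1 i) //= lerDl; apply: sumr_ge0 => j _; exact: dotvv_ge0.
Qed.

Lemma logit_bound y i j : (forall k, on_sphere (y k)) ->
  `|logit y i j| <= 1 + beta ^+ 2 * frobenius2 V.
Proof.
move=> y1; have Q_ge0 : 0 <= beta ^+ 2 * frobenius2 V.
  by rewrite mulr_ge0 ?sqr_ge0 ?frobenius2_ge0.
have : logit y i j ^+ 2 <= beta ^+ 2 * frobenius2 V.
  rewrite /logit !exprMn -exprMn sign_mul_sqr mul1r ler_wpM2l ?sqr_ge0 //.
  by have := dotv_mulmx_sqr_le V (y j) (y1 i); rewrite y1 mulr1.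
have := real_normK (num_real (logit y i j)); have := normr_ge0 (logit y i j); nra.
Qed.

Lemma dotvv_attn_weight_le y i j (z : 'cV[R]_d) :
  '[attn_weight y i j *: (V *m z)] <= frobenius2 V * '[z].
Proof.
rewrite dotvvZ -[X in _ <= X]mul1r; apply: ler_pM; rewrite ?sqr_ge0 ?dotvv_ge0 //.
  by rewrite -real_normK ?num_real // expr_le1 ?attn_weight_le1.
exact: dotvv_mulmx_le.
Qed.

Lemma attn_mean_sqr_le y i : (forall k, on_sphere (y k)) ->
  '[attn_mean y i] <= n%:R ^+ 2 * frobenius2 V.
Proof.
move=> y1; apply: le_trans (dotvv_sum_le _) _; rewrite expr2 -mulrA ler_wpM2l //.
apply: (@le_trans _ _ (\sum_(j < n) frobenius2 V)); last first.
  by rewrite sumr_const card_ord mulr_natl.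
by apply: ler_sum => j _; have := dotvv_attn_weight_le y i j (y j); rewrite y1 mulr1.
Qed.

Lemma logit_sqrdist_le y u i j : (forall k, on_sphere (y k)) -> on_sphere u ->
  (logit y i j - logit (fun=> u) i j) ^+ 2 <=
  beta ^+ 2 * (2 * frobenius2 V * ('[y i - u] + '[y j - u])).
Proof.
move=> y1 u1; rewrite /logit /= -!mulrBr exprMn sign_mul_sqr mul1r exprMn.
rewrite ler_wpM2l ?sqr_ge0 //.
have -> : '[y i, V *m y j] - '[u, V *m u] = '[y i - u, V *m y j] + '[u, V *m (y j - u)].
  by rewrite dotvBl mulmxBr dotvBr addrA subrK.
set p := '[y i - u, _]; set q := '[u, _].
have hp : p ^+ 2 <= frobenius2 V * '[y i - u].
  apply: le_trans (dotv_cauchy_schwarz _ _) _; rewrite mulrC ler_wpM2r ?dotvv_ge0 //.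
  by have := dotvv_mulmx_le V (y j); rewrite y1 mulr1.
have hq : q ^+ 2 <= frobenius2 V * '[y j - u] := dotv_mulmx_sqr_le V _ u1.
have := sqr_ge0 (p - q); nra.
Qed.

Lemma sum_attn_weight_sqrdist : exists2 C, 0 <= C & forall y u i,
  (forall k, on_sphere (y k)) -> on_sphere u ->
  (\sum_(j < n) attn_weight y i j - \sum_(j < n) attn_weight (fun=> u) i j) ^+ 2
    <= C * dispersion y u.
Proof.
set L := frobenius2 V; set K := 1 + beta ^+ 2 * L.
have L_ge0 : 0 <= L := frobenius2_ge0 V.
exists ((2 * expR K * expR K) ^+ 2 * n%:R * (beta ^+ 2 * (2 * L * (n%:R + 1)))).
  apply/mulr_ge0/mulr_ge0; [apply: mulr_ge0; [exact: sqr_ge0 | exact: ler0n] |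
    exact: sqr_ge0 | by rewrite !mulr_ge0 ?addr_ge0 ?ler0n].
move=> y u i y1 u1; rewrite !sum_attn_weight.
have w_le1 j : `|s i * s j| <= 1 by rewrite norm_sign_mul.
set Y := beta ^+ 2 * (2 * L * (n%:R + 1)).
have logit_sum : \sum_(k < n) (logit y i k - logit (fun=> u) i k) ^+ 2 <= Y * dispersion y u.
  apply: le_trans (ler_sum _ (fun k _ => logit_sqrdist_le i k y1 u1)) _.
  rewrite -!mulr_sumr /Y -[X in _ <= X]mulrA ler_wpM2l ?sqr_ge0 //.
  rewrite -[X in _ <= X]mulrA ler_wpM2l ?mulr_ge0 //.
  rewrite big_split /= sumr_const card_ord mulrDl mul1r lerD2r.
  by rewrite mulr_natl lerMn2r dotvv_le_dispersion orbT.
apply: le_trans (softmax_avg_sqrdist_le w_le1 i (logit_bound i^~ y1)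
  (logit_bound i^~ (fun=> u1))) _.
by rewrite -/L -/K -[X in _ <= X]mulrA ler_wpM2l // mulr_ge0 ?sqr_ge0.
Qed.

Lemma attn_mean_sqrdist : exists2 C, 0 <= C & forall y u i,
  (forall k, on_sphere (y k)) -> on_sphere u ->
  '[attn_mean y i - (\sum_(j < n) attn_weight (fun=> u) i j) *: (V *m u)]
    <= C * dispersion y u.
Proof.
have [C C_ge0 weightC] := sum_attn_weight_sqrdist.
set L := frobenius2 V; have L_ge0 : 0 <= L := frobenius2_ge0 V.
exists (2 * (n%:R * L) + 2 * (L * C)); first by rewrite addr_ge0 ?mulr_ge0 ?ler0n.
move=> y u i y1 u1; set c := \sum_(j < n) attn_weight (fun=> u) i j.
have -> : attn_mean y i - c *: (V *m u) =
    \sum_(j < n) attn_weight y i j *: (V *m (y j - u)) +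
    (\sum_(j < n) attn_weight y i j - c) *: (V *m u).
  under eq_bigr do rewrite mulmxBr scalerBr.
  by rewrite sumrB -scaler_suml scalerBl addrA subrK.
apply: le_trans (dotvvD_le _ _) _.
have spread_le : '[\sum_(j < n) attn_weight y i j *: (V *m (y j - u))]
    <= n%:R * L * dispersion y u.
  apply: le_trans (dotvv_sum_le _) _; rewrite -mulrA ler_wpM2l // /dispersion mulr_sumr.
  by apply: ler_sum => j _; exact: dotvv_attn_weight_le.
have mass_le : '[(\sum_(j < n) attn_weight y i j - c) *: (V *m u)]
    <= L * (C * dispersion y u).
  rewrite dotvvZ mulrC; apply: ler_pM; rewrite ?dotvv_ge0 ?sqr_ge0 ?weightC //.
  by have := dotvv_mulmx_le V u; rewrite u1 mulr1.
have := dispersion_ge0 y u; nra.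
Qed.

End SignedDynamics.

Section BalancedSignedDynamics.
Variables (R : realType) (n d : nat) (beta : R) (V : 'M[R]_d) (s : 'I_n -> R).
Hypotheses (s_sign : forall i, s i = 1 \/ s i = -1)
  (s_balanced : #|[set i | s i == 1]%SET| = #|[set i | s i == -1]%SET|).

Definition consensus_rhs (u : 'cV[R]_d) :=
  proj_perp u (tanh (beta * '[u, V *m u]) *: (V *m u)).

Lemma sum_attn_weight_consensus u i :
  \sum_(j < n) attn_weight beta V s (fun=> u) i j = tanh (beta * '[u, V *m u]).
Proof. by rewrite sum_attn_weight; exact: softmax_avg_balanced (s_sign i). Qed.

Lemma signed_rhs_near_consensus : exists2 C, 0 <= C & forall y u i,
  (forall k, on_sphere (y k)) -> on_sphere u ->
  '[signed_rhs beta V s y i - consensus_rhs u] <= C * dispersion y u.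
Proof.
have [C C_ge0 meanC] := attn_mean_sqrdist beta V s_sign.
have B_ge0 : 0 <= n%:R ^+ 2 * frobenius2 V by rewrite mulr_ge0 ?sqr_ge0 ?frobenius2_ge0.
exists (8 * C + 8 * (n%:R ^+ 2 * frobenius2 V)).
  by apply: addr_ge0; apply: mulr_ge0; rewrite ?ler0n.
move=> y u i y1 u1; rewrite signed_rhsE //.
have := proj_perp_sqrdist_le
  ((\sum_(j < n) attn_weight beta V s (fun=> u) i j) *: (V *m u)) (y1 i) u1
  (attn_mean_sqr_le beta V s_sign i y1).
rewrite sum_attn_weight_consensus => /le_trans; apply.
have := meanC y u i y1 u1; rewrite sum_attn_weight_consensus.
have := ler_wpM2l B_ge0 (dotvv_le_dispersion y u i); lra.
Qed.

Lemma signed_rhs_consensus u i :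
  on_sphere u -> signed_rhs beta V s (fun=> u) i = consensus_rhs u.
Proof.
move=> u1; have [C _ nearC] := signed_rhs_near_consensus.
have := nearC _ _ i (fun=> u1) u1.
have -> : dispersion (fun _ : 'I_n => u) u = 0 by apply: big1 => j _; rewrite subrr dotv0l.
rewrite mulr0 => sqr_le0; apply/subr0_eq/dotvv_eq0/le_anti.
by rewrite sqr_le0 dotvv_ge0.
Qed.

Lemma signed_rhs_spread : exists2 C, 0 <= C & forall y i0,
  (forall k, on_sphere (y k)) ->
  \sum_(j < n) '[signed_rhs beta V s y j - signed_rhs beta V s y i0]
    <= C * dispersion y (y i0).
Proof.
have [C C_ge0 nearC] := signed_rhs_near_consensus.
exists (4 * C *+ n); first by rewrite mulrn_wge0 ?mulr_ge0.
move=> y i0 y1; set g := consensus_rhs (y i0).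
apply: (@le_trans _ _ (\sum_(j < n) 4 * C * dispersion y (y i0))).
  apply: ler_sum => j _.
  have shift (a b c : 'cV[R]_d) : a - b = (a - c) - (b - c) by rewrite opprB subrKA.
  rewrite (shift _ _ g); apply: le_trans (dotvvB_le _ _) _.
  by have := nearC y (y i0) j y1 (y1 i0); have := nearC y (y i0) i0 y1 (y1 i0); lra.
by rewrite sumr_const card_ord (mulrnAl (4 * C)).
Qed.

End BalancedSignedDynamics.

Section ReducedDynamics.
Variables (R : realType) (d : nat) (beta : R) (V : 'M[R]_d).
Variables (e : 'I_d -> 'cV[R]_d) (lam : 'I_d -> R).
Hypotheses (V_sym : V^T = V) (e_orthonormal : forall k l, '[e k, e l] = (k == l)%:R)
  (e_eigen : forall k, V *m e k = lam k *: e k).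

Lemma dotv_consensus_rhs k u : on_sphere u ->
  '[e k, consensus_rhs beta V u] = '[e k, u] *
    tanh (beta * \sum_(l < d) lam l * '[e l, u] ^+ 2) *
    (lam k - \sum_(l < d) lam l * '[e l, u] ^+ 2).
Proof.
move=> u1; set M := \sum_(l < d) _.
have uVu : '[u, V *m u] = M by exact: quadratic_form_eigenbasis.
rewrite /consensus_rhs /proj_perp dotvBr !dotvZr uVu (dotv_eigenvector V_sym e_eigen); ring.
Qed.

Lemma consensus_rhs_eigenvector k : consensus_rhs beta V (e k) = 0.
Proof.
rewrite /consensus_rhs /proj_perp e_eigen scalerA !dotvZr e_orthonormal eqxx /=.
by rewrite !mulr1 subrr.
Qed.

End ReducedDynamics.

Section BipolarInvariance.
Variables (R : realType) (n d : nat) (beta : R) (V : 'M[R]_d) (s : 'I_n -> R).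
Variable x : R -> 'I_n -> 'cV[R]_d.
Hypotheses (s_sign : forall i, s i = 1 \/ s i = -1)
  (s_balanced : #|[set i | s i == 1]%SET| = #|[set i | s i == -1]%SET|)
  (x_sphere : forall t : R, 0 <= t -> forall i, on_sphere (x t i))
  (x_cont : forall i r, (fun t : R => x t i r ord0) @ 0^'+ --> x 0 i r ord0)
  (x_deriv : forall t : R, 0 < t -> forall i,
     coord_derive (fun tau => x tau i) t (attn_rhs beta V (x t) i)).
Variables (u0 : 'cV[R]_d) (i0 : 'I_n).
Hypothesis x_init : forall i, x 0 i = s i *: u0.

Definition signed_traj (t : R) j := s j *: x t j.

Lemma signed_trajK (t : R) : (fun j => s j *: signed_traj t j) = x t.
Proof. by apply/funext => j; rewrite /signed_traj scalerA -expr2 sign_sqr // scale1r. Qed.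

Lemma signed_traj_sphere (t : R) j : 0 <= t -> on_sphere (signed_traj t j).
Proof. by move=> t0; rewrite /on_sphere dotvvZ sign_sqr // mul1r; exact: x_sphere. Qed.

Lemma signed_traj_derive (t : R) j : 0 < t ->
  coord_derive (signed_traj^~ j) t (signed_rhs beta V s (signed_traj t) j).
Proof.
by move=> t0; rewrite /signed_rhs signed_trajK; exact: coord_deriveZ (x_deriv t0 j).
Qed.

Definition traj_dispersion (t : R) := dispersion (signed_traj t) (signed_traj t i0).

Lemma traj_dispersion_derive (t : R) : 0 < t ->
  is_derive t 1 traj_dispersion (2 * \sum_(j < n)
    '[signed_traj t j - signed_traj t i0,
      signed_rhs beta V s (signed_traj t) j - signed_rhs beta V s (signed_traj t) i0]).
Proof.
move=> t0; have -> : traj_dispersion =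
    \sum_(j < n) (fun tau => '[signed_traj tau j - signed_traj tau i0]).
  by apply/funext => tau; rewrite fct_sumE.
rewrite mulr_sumr; apply: is_derive_sum => j.
have dj := coord_deriveB (signed_traj_derive j t0) (signed_traj_derive i0 t0).
by rewrite mulr2n mulrDl mul1r [X in X + _]dotvC; exact: is_derive_dotv.
Qed.

Lemma traj_dispersion_growth : exists2 C, 0 <= C & forall t : R, 0 < t ->
  2 * \sum_(j < n) '[signed_traj t j - signed_traj t i0,
    signed_rhs beta V s (signed_traj t) j - signed_rhs beta V s (signed_traj t) i0]
  <= C * traj_dispersion t.
Proof.
have [C C_ge0 spreadC] := signed_rhs_spread beta V s_sign s_balanced.
exists (1 + C); first by rewrite addr_ge0.
move=> t t0; rewrite [(1 + C) * _]mulrDl mul1r mulr_sumr.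
apply: le_trans (ler_sum _ (fun j _ => dotv_amgm _ _)) _.
rewrite big_split lerD2l; apply: spreadC => j.
exact: signed_traj_sphere (ltW t0).
Qed.

Lemma traj_dispersion_cvg : traj_dispersion @ 0^'+ --> traj_dispersion 0.
Proof.
apply: cvg_sum_ord => j; apply: cvg_dotv => r.
all: rewrite !mxE; under eq_fun do rewrite !mxE.
all: by apply: cvgB; apply: cvgMl_tmp; exact: x_cont.
Qed.

Lemma traj_dispersion0 : traj_dispersion 0 = 0.
Proof.
apply: big1 => j _.
by rewrite /signed_traj !x_init !scalerA -!expr2 !sign_sqr // subrr dotv0l.
Qed.

Lemma bipolar_invariance (t : R) : 0 <= t -> forall j, signed_traj t j = signed_traj t i0.
Proof.
have [C C_ge0 growthC] := traj_dispersion_growth.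
have W0 := gronwall_zero C_ge0 traj_dispersion_derive growthC
  (fun t _ => dispersion_ge0 _ _) traj_dispersion_cvg traj_dispersion0.
move=> t0 j; apply/subr0_eq/dotvv_eq0/le_anti.
by rewrite dotvv_ge0 -(W0 t t0) dotvv_le_dispersion.
Qed.

Lemma consensus_traj_derive (t : R) : 0 < t ->
  coord_derive (signed_traj^~ i0) t (consensus_rhs beta V (signed_traj t i0)).
Proof.
move=> t0; have -> : consensus_rhs beta V (signed_traj t i0) =
    signed_rhs beta V s (signed_traj t) i0.
  rewrite (_ : signed_traj t = fun=> signed_traj t i0); last first.
    by apply/funext => j; exact: bipolar_invariance (ltW t0) j.
  by rewrite signed_rhs_consensus //; exact: signed_traj_sphere (ltW t0).
exact: signed_traj_derive.
Qed.

End BipolarInvariance.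

Lemma on_sphere_dim_gt0 (R : realType) d (u : 'cV[R]_d) : on_sphere u -> (0 < d)%N.
Proof.
by case: d u => // u; rewrite /on_sphere /dotv big_ord0 => /eqP; rewrite eq_sym oner_eq0.
Qed.

Theorem proposition4p3 (R : realType) (n d : nat) (beta : R)
  (V : 'M[R]_d) (e : 'I_d -> 'cV[R]_d) (lam : 'I_d -> R)
  (s : 'I_n -> R) (u0 : 'cV[R]_d) (x : R -> 'I_n -> 'cV[R]_d) :
  0 < beta ->
  V^T = V ->
  (forall k l : 'I_d, dotv (e k) (e l) = (k == l)%:R) ->
  (forall k : 'I_d, V *m e k = lam k *: e k) ->
  (forall i, s i = 1 \/ s i = -1) ->
  #|[set i | s i == 1]%SET| = #|[set i | s i == -1]%SET| ->
  on_sphere u0 ->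
  (forall i, x 0 i = s i *: u0) ->
  (forall t : R, 0 <= t -> forall i, on_sphere (x t i)) ->
  (forall i (r : 'I_d),
     (fun t : R => x t i r ord0) @ 0^'+ --> x 0 i r ord0) ->
  (forall t : R, 0 < t -> forall i (r : 'I_d),
     is_derive t 1 (fun tau => x tau i r ord0) (attn_rhs beta V (x t) i r ord0)) ->
  exists u : R -> 'cV[R]_d,
    (forall t : R, 0 <= t -> on_sphere (u t) /\ forall i, x t i = s i *: u t) /\
    (forall t : R, 0 < t -> forall k : 'I_d,
       let M := \sum_(l < d) lam l * (dotv (e l) (u t)) ^+ 2 in
       is_derive t 1 (fun tau => dotv (e k) (u tau))
         (dotv (e k) (u t) * tanh (beta * M) * (lam k - M))).
Proof.
(* The argument works for every real beta. *)
move=> _ V_sym e_on e_eigen s_sign s_bal u0_1 x_init x_sphere x_cont x_deriv.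
have [n0 | n_gt0] := posnP n.
  (* Without particles, any stationary point of the reduced flow will do. *)
  pose k0 := Ordinal (on_sphere_dim_gt0 u0_1).
  have ek0_1 : on_sphere (e k0) by rewrite /on_sphere e_on eqxx.
  exists (fun=> e k0); split => [t _ | t _ k M].
    by split=> // i; suff : (i < 0)%N by []; rewrite -n0.
  rewrite /M -(dotv_consensus_rhs _ V_sym e_on e_eigen) //.
  by rewrite (consensus_rhs_eigenvector _ e_on e_eigen) dotv0r; exact: is_derive_cst.
pose i0 := Ordinal n_gt0; pose u t := signed_traj s x t i0.
have invariance := bipolar_invariance s_sign s_bal x_sphere x_cont x_deriv i0 x_init.
exists u; split => [t t0 | t t0 k M].
  split=> [|i]; first exact: signed_traj_sphere.
  by rewrite /u -(invariance t t0 i) /signed_traj scalerA -expr2 sign_sqr // scale1r.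
have := is_derive_dotv (coord_derive_cst (e k) t)
  (consensus_traj_derive s_sign s_bal x_sphere x_cont x_deriv i0 x_init t0).
rewrite dotv0l add0r (dotv_consensus_rhs _ V_sym e_on e_eigen) //.
exact: signed_traj_sphere (ltW t0).
Qed.
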